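(* Let $f$ be convex and differentiable with $L$-Lipschitz gradient, $h$ proper closed convex, $F=f+h$, $\mathbf{x}^*$ a minimizer of $F$, $\alpha>0$ with $\alpha L\le1$, and $\varepsilon\ge0$. Let $\mathbf{x}^{(k-1)},\mathbf{v}^{(k)},\mathbf{e}^{(k)}\in\mathbb{R}^d$ with $\|\mathbf{v}^{(k)}-\nabla f(\mathbf{x}^{(k-1)})\|\le M$, let $\mathbf{q}^{(k)}=\mathbf{x}^{(k-1)}-\alpha(\mathbf{v}^{(k)}+\mathbf{e}^{(k)})$, and let $\mathbf{x}^{(k)}$ be an $\varepsilon$-inexact proximal point of $\mathbf{q}^{(k)}$. Let $\mathbf{g}$ satisfy $\frac1\alpha(\mathbf{q}^{(k)}+\mathbf{g}-\mathbf{x}^{(k)})\in\partial_\varepsilon h(\mathbf{x}^{(k)})$ and $\|\mathbf{g}\|\le\sqrt{2\alpha\varepsilon}$, let $\boldsymbol{\xi}^{(k-1)}=\frac1\alpha(\mathbf{x}^{(k-1)}-\mathbf{x}^{(k)})$, and let $\underline{\mathbf{x}}$ be an $\varepsilon$-inexact proximal point of $\mathbf{x}^{(k-1)}-\alpha\nabla f(\mathbf{x}^{(k-1)})$. Then $$-\alpha^2\|\boldsymbol{\xi}^{(k-1)}\|^2-2\alpha\langle\boldsymbol{\xi}^{(k-1)},\mathbf{x}^{(k)}-\mathbf{x}^*\rangle\le-2\alpha\big(F(\mathbf{x}^{(k)})-F(\mathbf{x}^* )\big)+2\alpha\varepsilon+2\alpha^2\|\mathbf{v}^{(k)}-\nabla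 f(\mathbf{x}^{(k-1)})\|^2+\big(2\alpha^2\|\mathbf{e}^{(k)}\|+6\alpha\sqrt{2\alpha\varepsilon}\big)M-2\alpha\langle\mathbf{x}^{(k)}-\mathbf{x}^*,\mathbf{e}^{(k)}-\tfrac1\alpha\mathbf{g}\rangle-2\alpha\langle\underline{\mathbf{x}}-\mathbf{x}^*,\mathbf{v}^{(k)}-\nabla f(\mathbf{x}^{(k-1)})\rangle.$$
   Context: A point $\mathbf{x}$ is an $\varepsilon$-inexact proximal point of $\mathbf{z}$ (with parameter $\alpha$) if $\frac1{2\alpha}\|\mathbf{x}-\mathbf{z}\|^2+h(\mathbf{x})\le\min_{\mathbf{y}}\{\frac1{2\alpha}\|\mathbf{y}-\mathbf{z}\|^2+h(\mathbf{y})\}+\varepsilon$. The $\varepsilon$-subdifferential is $\partial_\varepsilon h(\mathbf{x})=\{\mathbf{p}: h(\mathbf{y})\ge h(\mathbf{x})+\langle\mathbf{p},\mathbf{y}-\mathbf{x}\rangle-\varepsilon\ \forall\mathbf{y}\}$. *)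

From HB Require Import structures.
From mathcomp Require Import all_boot all_order all_algebra.
From mathcomp Require Import classical_sets boolp reals constructive_ereal ereal.
Set Implicit Arguments. Unset Strict Implicit. Unset Printing Implicit Defensive.
Import Order.TTheory GRing.Theory Num.Theory.
Local Open Scope ring_scope.
Local Open Scope classical_set_scope.

Section Defs.
Variables (R : realType) (d : nat).
Local Notation V := 'rV[R]_d.

Definition dotv (u v : V) : R := (u *m v^T) 0 0.
Definition nrm (u : V) : R := Num.sqrt (dotv u u).

Definition is_gradient (f : V -> R) (g : V) (x : V) : Prop :=
  forall e : R, 0 < e -> exists2 delta : R, 0 < delta &
    forall y : V, nrm (y - x) < delta ->
      `|f y - f x - dotv g (y - x)| <= e * nrm (y - x).

Definition convex_fun (f : V -> R) : Prop :=
  forall (x y : V) (t : R), 0 <= t <= 1 ->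
    f (t *: x + (1 - t) *: y) <= t * f x + (1 - t) * f y.

Definition lipschitz_map (L : R) (G : V -> V) : Prop :=
  forall x y : V, nrm (G x - G y) <= L * nrm (x - y).

Definition proper_fun (h : V -> \bar R) : Prop :=
  (forall x, h x != -oo%E) /\ (exists x, h x \is a fin_num).

Definition closed_fun (h : V -> \bar R) : Prop :=
  forall (x : V) (a : R), (a%:E < h x)%E ->
    exists2 delta : R, 0 < delta &
      forall y : V, nrm (y - x) < delta -> (a%:E < h y)%E.

Definition convex_efun (h : V -> \bar R) : Prop :=
  forall (x y : V) (t : R), 0 < t < 1 ->
    (h (t *: x + (1 - t) *: y)%R <= t%:E * h x + (1 - t)%R%:E * h y)%E.

Definition inexact_prox (h : V -> \bar R) (alpha eps : R) (z x : V) : Prop :=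
  ((1 / (2 * alpha) * nrm (x - z) ^+ 2)%:E + h x <=
   ereal_inf [set ((1 / (2 * alpha) * nrm (y - z) ^+ 2)%:E + h y)%E | y in [set: V]]
   + eps%:E)%E.

Definition eps_subdiff (h : V -> \bar R) (eps : R) (x p : V) : Prop :=
  forall y : V, (h y >= h x + (dotv p (y - x)%R)%:E - eps%:E)%E.

End Defs.

From HB Require Import structures.
From mathcomp Require Import all_boot all_order all_algebra.
From mathcomp Require Import classical_sets boolp reals constructive_ereal ereal.
From mathcomp Require Import ring lra.
Import Order.TTheory GRing.Theory Num.Theory.
Local Open Scope ring_scope.

(* Split F(x_k) - F(x* ) into its smooth and nonsmooth parts. The smooth part
   is bounded by the descent lemma at x_{k-1} combined with the gradient
   inequality of convexity, the nonsmooth part by the eps-subgradient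
   inequality at x_k; the term alpha^3 L |xi|^2 coming from the descent lemma
   is absorbed by alpha L <= 1. What is left is the cross term
   <xbar - x_k, v - grad f(x_{k-1})>, controlled by a stability estimate:
   an inexact proximal point of z and an approximate proximal point of q lie
   within |q - z| + 3 sqrt(2 alpha eps) of each other. *)

Section InnerProduct.
Set Implicit Arguments. Unset Strict Implicit.
Variables (R : realType) (d : nat).
Local Notation V := 'rV[R]_d.
Implicit Types (a b c : V) (k : R).

Lemma dotvC a b : dotv a b = dotv b a.
Proof. by rewrite /dotv -(trmxK (b *m a^T)) trmx_mul trmxK [RHS]mxE. Qed.

Lemma dotvDl a b c : dotv (a + b) c = dotv a c + dotv b c.
Proof. by rewrite /dotv mulmxDl mxE. Qed.

Lemma dotvZl k a c : dotv (k *: a) c = k * dotv a c.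
Proof. by rewrite /dotv -scalemxAl mxE. Qed.

Lemma dotvNl a c : dotv (- a) c = - dotv a c.
Proof. by rewrite -scaleN1r dotvZl mulN1r. Qed.

Lemma dotvBl a b c : dotv (a - b) c = dotv a c - dotv b c.
Proof. by rewrite dotvDl dotvNl. Qed.

Lemma dotvDr a b c : dotv c (a + b) = dotv c a + dotv c b.
Proof. by rewrite dotvC dotvDl !(dotvC c). Qed.

Lemma dotvZr k a c : dotv c (k *: a) = k * dotv c a.
Proof. by rewrite dotvC dotvZl dotvC. Qed.

Lemma dotvNr a c : dotv c (- a) = - dotv c a.
Proof. by rewrite dotvC dotvNl dotvC. Qed.

Lemma dotvBr a b c : dotv c (a - b) = dotv c a - dotv c b.
Proof. by rewrite dotvDr dotvNr. Qed.

Lemma dotvvE a : dotv a a = \sum_i a 0 i ^+ 2.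
Proof. by rewrite /dotv mxE; apply: eq_bigr => i _; rewrite mxE expr2. Qed.

Lemma dotv_ge0 a : 0 <= dotv a a.
Proof. by rewrite dotvvE sumr_ge0 // => i _; apply: sqr_ge0. Qed.

Lemma dotv_eq0 a : (dotv a a == 0) = (a == 0).
Proof.
apply/eqP/eqP => [a0|->]; last by rewrite dotvvE big1 // => i _; rewrite mxE expr0n.
apply/rowP => i; rewrite mxE; apply/eqP; rewrite -sqrf_eq0; apply/eqP.
by move: a0; rewrite dotvvE => /psumr_eq0P; apply => // j _; apply: sqr_ge0.
Qed.

Lemma nrm_ge0 a : 0 <= nrm a.
Proof. exact: sqrtr_ge0. Qed.

Lemma nrm_gt0 a : (0 < nrm a) = (a != 0).
Proof. by rewrite sqrtr_gt0 lt_neqAle dotv_ge0 andbT eq_sym dotv_eq0. Qed.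

Lemma nrm_sqr a : nrm a ^+ 2 = dotv a a.
Proof. by rewrite sqr_sqrtr // dotv_ge0. Qed.

Lemma nrmZ k a : nrm (k *: a) = `|k| * nrm a.
Proof.
by rewrite /nrm dotvZl dotvZr mulrA -expr2 sqrtrM ?sqr_ge0 // sqrtr_sqr.
Qed.

Lemma nrmN a : nrm (- a) = nrm a.
Proof. by rewrite /nrm dotvNl dotvNr opprK. Qed.

Lemma nrm_sqrD a b : nrm (a + b) ^+ 2 = nrm a ^+ 2 + 2 * dotv a b + nrm b ^+ 2.
Proof. by rewrite !nrm_sqr dotvDl !dotvDr (dotvC b a); ring. Qed.

Lemma dotv_le_nrm a b : dotv a b <= nrm a * nrm b.
Proof.
have [->|a0] := eqVneq a 0; first by rewrite /dotv mul0mx mxE mulr_ge0 ?nrm_ge0.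
have [->|b0] := eqVneq b 0; first by rewrite /dotv trmx0 mulmx0 mxE mulr_ge0 ?nrm_ge0.
have ab0 : 0 < nrm a * nrm b by rewrite mulr_gt0 ?nrm_gt0.
have := dotv_ge0 (nrm b *: a - nrm a *: b).
rewrite !(dotvBl, dotvBr, dotvZl, dotvZr) (dotvC b a) -!nrm_sqr; nra.
Qed.

Lemma nrm_triangle a b : nrm (a + b) <= nrm a + nrm b.
Proof.
rewrite -(ler_pXn2r (n := 2)) ?nnegrE ?addr_ge0 ?nrm_ge0 //.
rewrite nrm_sqrD sqrrD; have := dotv_le_nrm a b; lra.
Qed.

End InnerProduct.

Section RealBounds.
Set Implicit Arguments. Unset Strict Implicit.
Variable R : realFieldType.
Implicit Types x y c : R.

Lemma ler_of_slack x y c :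
  0 <= c -> (forall e, 0 < e -> x <= y + e * c) -> x <= y.
Proof.
move=> c0 H; apply/ler_addgt0Pr => e e0.
have c1 : 0 < c + 1 by lra.
apply: (le_trans (H _ (divr_gt0 e0 c1))); rewrite lerD2l mulrAC ler_pdivrMr //.
nra.
Qed.

(* The choice [t = (n - a - s) / (2 n)] turns the hypothesis into
   [3/4 (n - a - s)^2 <= (1 + t) s^2], which fails as soon as [n > a + 3 s]. *)
Lemma interpolation_bound (n a s : R) : 0 <= a -> 0 <= s ->
  (forall t, 0 < t -> t < 1 ->
     t * (2 - t) * n ^+ 2 <= t * (2 * (a + s) * n + s ^+ 2) + s ^+ 2) ->
  n <= a + 3 * s.
Proof.
move=> a0 s0 H; rewrite leNgt; apply/negP => hn.
have n0 : 0 < n by lra.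
pose del := n - a - s; pose t := del / (2 * n).
have t0 : 0 < t by rewrite divr_gt0 ?mulr_gt0 // /del; lra.
have t_half : t <= 1 / 2 by rewrite ler_pdivrMr ?mulr_gt0 // /del; lra.
have t1 : t < 1 by lra.
have := H t t0 t1.
have -> : t * (2 - t) * n ^+ 2 = t * (2 * (a + s) * n) + 3 / 4 * del ^+ 2.
  by rewrite /t /del; field; rewrite gt_eqF.
have : t * s ^+ 2 <= 1 / 2 * s ^+ 2 by rewrite ler_wpM2r ?sqr_ge0.
have : 4 * s ^+ 2 < del ^+ 2 by rewrite /del; nra.
have := sqr_ge0 s; lra.
Qed.

End RealBounds.

Section SmoothConvex.
Set Implicit Arguments. Unset Strict Implicit.
Variables (R : realType) (d : nat).
Local Notation V := 'rV[R]_d.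
Variables (f : V -> R) (G : V -> V) (L : R).
Hypotheses (f_convex : convex_fun f) (f_grad : forall x, is_gradient f (G x) x).

Lemma convex_gradient_le x y : f x + dotv (G x) (y - x) <= f y.
Proof.
set v := y - x; have v0 := nrm_ge0 v.
apply: (ler_of_slack v0) => e e0.
have [del del0 Hdel] := f_grad x e0.
set t := del / (nrm v + del).
have t0 : 0 < t by rewrite divr_gt0 //; lra.
have t1 : t <= 1 by rewrite ler_pdivrMr ?mul1r; lra.
have tv : nrm (t *: v) = t * nrm v by rewrite nrmZ ger0_norm ?ltW.
have tv_del : nrm (t *: v) < del.
  by rewrite tv /t mulrAC ltr_pdivrMr; nra.
have := Hdel (x + t *: v); rewrite addrAC subrr add0r => /(_ tv_del).
rewrite dotvZr tv ler_norml => /andP[Hdiff _].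
have := f_convex y x (t := t); rewrite ltW //= t1 => /(_ isT).
have -> : t *: y + (1 - t) *: x = x + t *: v.
  by apply/rowP => i; rewrite !mxE; ring.
move=> Hconv; rewrite -(ler_pM2l t0); lra.
Qed.

Hypothesis G_lipschitz : lipschitz_map L G.

Lemma lipschitz_dotv_le x v : dotv (G (x + v) - G x) v <= L * nrm v ^+ 2.
Proof.
apply: (le_trans (dotv_le_nrm _ _)); rewrite expr2 mulrA ler_wpM2r ?nrm_ge0 //.
by have := G_lipschitz (x + v) x; rewrite addrAC subrr add0r.
Qed.

(* Induction on [n] splits [v] into two halves; this replaces the integral
   proof of the descent lemma. *)
Lemma descent_halving n x v :
  f (x + v) - f x - dotv (G x) v <= (2^-1 + 2^-n.+1) * L * nrm v ^+ 2.
Proof.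
elim: n x v => [|n IH] x v.
  have -> : 2^-1 + 2^-1 = 1 :> R by field.
  have := convex_gradient_le (x + v) x; have := lipschitz_dotv_le x v.
  rewrite opprD addNKr dotvNr dotvBl; lra.
set w := 2^-1 *: v.
have vw : v = w + w by apply/rowP => i; rewrite !mxE; field.
have nw : nrm w = nrm v / 2 by rewrite nrmZ ger0_norm ?invr_ge0 // mulrC.
have H1 := IH x w; have H2 := IH (x + w) w; have H3 := lipschitz_dotv_le x w.
rewrite nw in H1 H2 H3; rewrite {1 2}vw addrA dotvDr; rewrite dotvBl in H3.
suff -> : (2^-1 + 2^-n.+2) * L * nrm v ^+ 2 =
  2 * ((2^-1 + 2^-n.+1) * L * (nrm v / 2) ^+ 2) + L * (nrm v / 2) ^+ 2.
  set B := (_ * L * _) in H1 H2 *; set C := L * _ in H3 *; lra.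
by rewrite !exprS; field; rewrite expf_neq0.
Qed.

Lemma descent_le x v : f (x + v) - f x - dotv (G x) v <= L / 2 * nrm v ^+ 2.
Proof.
set K := L * nrm v ^+ 2.
have -> : L / 2 * nrm v ^+ 2 = 2^-1 * K by rewrite /K mulrAC mulrC.
have bound n : f (x + v) - f x - dotv (G x) v <= 2^-1 * K + 2^-n.+1 * K.
  by rewrite -mulrDl /K mulrA; apply: descent_halving.
have [K0|K0] := lerP K 0.
  by have := bound 0%N; rewrite expr1; lra.
apply/ler_addgt0Pr => e e0.
have := archi_boundP (divr_ge0 (ltW K0) (ltW e0)).
set N := Num.Def.archi_bound _ => HN.
apply: le_trans (bound N) _; rewrite lerD2l mulrC ler_pdivrMr ?exprn_gt0 //.
rewrite ltW // mulrC -ltr_pdivrMr // (lt_trans HN) //.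
by rewrite -natrX ltr_nat (ltn_trans (ltnSn N)) // ltn_expl.
Qed.

Lemma smooth_convex_gap x y z :
  f y - f z <= dotv (G x) (y - z) + L / 2 * nrm (y - x) ^+ 2.
Proof.
have := descent_le x (y - x); have := convex_gradient_le x z.
have -> : y - z = (y - x) - (z - x) by rewrite opprB addrA subrK.
rewrite (addrC x) subrK [dotv _ (_ - (z - x))]dotvBr; lra.
Qed.

End SmoothConvex.

Section InexactProx.
Set Implicit Arguments. Unset Strict Implicit.
Variables (R : realType) (d : nat).
Local Notation V := 'rV[R]_d.
Variables (h : V -> \bar R) (alpha eps : R).
Hypothesis h_proper : proper_fun h.

Lemma inexact_prox_le z x : inexact_prox h alpha eps z x ->
  forall y, ((1 / (2 * alpha) * nrm (x - z) ^+ 2)%:E + h x <=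
             (1 / (2 * alpha) * nrm (y - z) ^+ 2 + eps)%:E + h y)%E.
Proof.
move=> Hx y; apply: le_trans Hx _; rewrite EFinD addeAC leeD2r //.
by apply: ereal_inf_lbound; exists y.
Qed.

Lemma proper_fin_of_le x c (k : V -> R) :
  (forall y, (c%:E + h x <= (k y)%:E + h y)%E) -> exists r, h x = r%:E.
Proof.
case: h_proper => hN [y hy] /(_ y); rewrite -(fineK hy) -EFinD.
by case: (h x) (hN x) => // r _ _; exists r.
Qed.

Lemma eps_subdiff_fin x y p hx : eps_subdiff h eps y p -> h x = hx%:E ->
  exists hy, h y = hy%:E.
Proof.
move=> /(_ x) + Ex; rewrite Ex.
by case: (h y) (h_proper.1 y) => // r; exists r.
Qed.

Lemma eps_subdiff_le_fin x y p hx hy : eps_subdiff h eps x p ->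
  h x = hx%:E -> h y = hy%:E -> hx + dotv p (y - x) - eps <= hy.
Proof. by move=> /(_ y) + Ex Ey; rewrite Ex Ey -EFinD lee_fin. Qed.

Lemma inexact_prox_le_fin z x y hx hy : 0 < alpha -> inexact_prox h alpha eps z x ->
  h x = hx%:E -> h y = hy%:E ->
  nrm (x - z) ^+ 2 + 2 * alpha * hx <= nrm (y - z) ^+ 2 + 2 * alpha * hy + 2 * alpha * eps.
Proof.
move=> a0 Hx Ex Ey; have := inexact_prox_le Hx y; rewrite Ex Ey -!EFinD lee_fin.
have a2 : 0 < 2 * alpha by rewrite mulr_gt0.
have cancel u : 2 * alpha * (1 / (2 * alpha) * u) = u by field; rewrite gt_eqF.
by move=> /(ler_wpM2l (ltW a2)); rewrite !mulrDr !cancel; lra.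
Qed.

Lemma convex_efun_fin x y hx hy t : convex_efun h ->
  h x = hx%:E -> h y = hy%:E -> 0 < t < 1 ->
  exists2 r, h (t *: x + (1 - t) *: y) = r%:E & r <= t * hx + (1 - t) * hy.
Proof.
move=> hc Ex Ey /(hc x y); rewrite Ex Ey -!EFinM -EFinD.
by case: (h _) (h_proper.1 (t *: x + (1 - t) *: y)) => // r _; exists r.
Qed.

End InexactProx.

Section ProxStability.
Set Implicit Arguments. Unset Strict Implicit.
Variables (R : realType) (d : nat).
Local Notation V := 'rV[R]_d.
Variables (h : V -> \bar R) (alpha eps : R).
Hypotheses (h_proper : proper_fun h) (h_convex : convex_efun h).
Hypotheses (alpha_gt0 : 0 < alpha) (eps_ge0 : 0 <= eps).

(* Comparing the prox inequality of [x] at the points of the segment [[y, x]]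
   with the approximate optimality condition at [y] yields the hypothesis of
   [interpolation_bound]. *)
Lemma inexact_prox_dist z x q y g :
  inexact_prox h alpha eps z x ->
  eps_subdiff h eps y (alpha^-1 *: (q + g - y)) ->
  nrm g <= Num.sqrt (2 * alpha * eps) ->
  nrm (x - y) <= nrm (q - z) + 3 * Num.sqrt (2 * alpha * eps).
Proof.
move=> Hx Hy Hg.
have [hx Ex] := proper_fin_of_le h_proper (inexact_prox_le Hx).
have [hy Ey] := eps_subdiff_fin h_proper Hy Ex.
set s := Num.sqrt _; have s0 : 0 <= s := sqrtr_ge0 _.
have s2 : s ^+ 2 = 2 * alpha * eps by rewrite sqr_sqrtr // !mulr_ge0 // ltW.
set D := x - y; set P := y - z; set w := q - z.
apply: (interpolation_bound (nrm_ge0 w) s0) => t t0 t1.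
have t01 : 0 < t < 1 by apply/andP.
have [r Er Hr] := convex_efun_fin h_proper h_convex Ey Ex t01.
have Hprox := inexact_prox_le_fin alpha_gt0 Hx Ex Er.
have Hsub := eps_subdiff_le_fin Hy Ey Ex.
have E1 : x - z = P + D by rewrite /P /D; apply/rowP => i; rewrite !mxE; ring.
have E2 : t *: y + (1 - t) *: x - z = P + (1 - t) *: D.
  by rewrite /P /D; apply/rowP => i; rewrite !mxE; ring.
have E3 : alpha^-1 *: (q + g - y) = alpha^-1 *: (w + g - P).
  by rewrite /w /P; congr (_ *: _); apply/rowP => i; rewrite !mxE; ring.
rewrite E1 E2 in Hprox; rewrite E3 in Hsub.
rewrite (nrm_sqrD P D) (nrm_sqrD P) dotvZr nrmZ exprMn in Hprox.
rewrite ger0_norm in Hprox; last by rewrite subr_ge0 ltW.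
move: Hsub; rewrite dotvZl -/D => /(ler_wpM2l (ltW alpha_gt0)).
rewrite mulrBr mulrDr mulrA mulfV ?gt_eqF // mul1r (dotvBl (w + g)) dotvDl.
move=> Hsub.
have wD : - dotv w D <= nrm w * nrm D.
  by rewrite -dotvNl -(nrmN w); apply: dotv_le_nrm.
have gD : - dotv g D <= s * nrm D.
  rewrite -dotvNl; apply: (le_trans (dotv_le_nrm _ _)).
  by rewrite nrmN ler_wpM2r ?nrm_ge0.
have t2 : 0 <= 2 * t by rewrite mulr_ge0 // ltW.
have a2 : 0 <= 2 * alpha by rewrite mulr_ge0 // ltW.
move: (ler_wpM2l a2 Hr) (ler_wpM2l t2 Hsub) (ler_wpM2l t2 wD) (ler_wpM2l t2 gD).
rewrite s2; lra.
Qed.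

Lemma inexact_prox_dotv_le z x q y g u e M :
  inexact_prox h alpha eps z x ->
  eps_subdiff h eps y (alpha^-1 *: (q + g - y)) ->
  nrm g <= Num.sqrt (2 * alpha * eps) ->
  q - z = - alpha *: (u + e) -> nrm u <= M ->
  dotv (x - y) u <= alpha * nrm u ^+ 2 + (alpha * nrm e + 3 * Num.sqrt (2 * alpha * eps)) * M.
Proof.
move=> Hx Hy Hg Eq uM; set s := Num.sqrt _.
have nD : nrm (x - y) <= alpha * (nrm u + nrm e) + 3 * s.
  apply: le_trans (inexact_prox_dist Hx Hy Hg) _.
  by rewrite Eq nrmZ normrN gtr0_norm // lerD2r ler_wpM2l ?nrm_triangle ?ltW.
have c0 : 0 <= alpha * nrm e + 3 * s.
  by rewrite addr_ge0 ?mulr_ge0 ?nrm_ge0 ?sqrtr_ge0 ?ltW.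
move: (dotv_le_nrm (x - y) u) (ler_wpM2r (nrm_ge0 u) nD) (ler_wpM2l c0 uM).
lra.
Qed.

End ProxStability.

Theorem proposition1 (R : realType) (d : nat)
  (f : 'rV[R]_d -> R) (gradf : 'rV[R]_d -> 'rV[R]_d) (L : R)
  (h : 'rV[R]_d -> \bar R) (xstar : 'rV[R]_d) (alpha eps M : R)
  (xkm1 vk ek xk g xbar : 'rV[R]_d) :
  convex_fun f ->
  (forall x, is_gradient f (gradf x) x) ->
  lipschitz_map L gradf ->
  proper_fun h -> closed_fun h -> convex_efun h ->
  (forall y, ((f xstar)%:E + h xstar <= (f y)%:E + h y)%E) ->
  0 < alpha -> alpha * L <= 1 -> 0 <= eps ->
  nrm (vk - gradf xkm1) <= M ->
  let qk := xkm1 - alpha *: (vk + ek) in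
  inexact_prox h alpha eps qk xk ->
  eps_subdiff h eps xk (alpha^-1 *: (qk + g - xk)) ->
  nrm g <= Num.sqrt (2 * alpha * eps) ->
  let xi := alpha^-1 *: (xkm1 - xk) in
  inexact_prox h alpha eps (xkm1 - alpha *: gradf xkm1) xbar ->
  let F := fun x => ((f x)%:E + h x)%E in
  ((- alpha ^+ 2 * nrm xi ^+ 2 - 2 * alpha * dotv xi (xk - xstar))%:E <=
   (- (2 * alpha))%:E * (F xk - F xstar)
   + (2 * alpha * eps
      + 2 * alpha ^+ 2 * nrm (vk - gradf xkm1) ^+ 2
      + (2 * alpha ^+ 2 * nrm ek + 6 * alpha * Num.sqrt (2 * alpha * eps)) * M
      - 2 * alpha * dotv (xk - xstar) (ek - alpha^-1 *: g)
      - 2 * alpha * dotv (xbar - xstar) (vk - gradf xkm1))%:E)%E.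
Proof.
move=> f_convex f_grad G_lip h_proper _ h_convex xstar_opt a0 aL e0 hM qk Hxk Hsub Hg xi Hxbar /=.
have [hk Ehk] := proper_fin_of_le h_proper (inexact_prox_le Hxk).
have [hs Ehs] := proper_fin_of_le h_proper xstar_opt.
rewrite Ehk Ehs -!EFinD lee_fin.
have Hf := smooth_convex_gap f_convex f_grad G_lip xkm1 xk xstar.
have Hh := eps_subdiff_le_fin Hsub Ehk Ehs.
set G0 := gradf xkm1; set u := vk - G0; set p := alpha^-1 *: (qk + g - xk).
have Hq : qk - (xkm1 - alpha *: G0) = - alpha *: (u + ek).
  by rewrite /qk /u; apply/rowP => i; rewrite !mxE; ring.
have HD := inexact_prox_dotv_le h_proper h_convex a0 e0 Hxbar Hsub Hg Hq hM.
have Exi : nrm (xk - xkm1) ^+ 2 = alpha ^+ 2 * nrm xi ^+ 2.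
  have -> : xk - xkm1 = - alpha *: xi.
    by rewrite /xi; apply/rowP => i; rewrite !mxE; field; rewrite gt_eqF.
  by rewrite nrmZ normrN gtr0_norm // exprMn.
have Edot : dotv G0 (xk - xstar) - dotv p (xstar - xk) =
    dotv xi (xk - xstar) - dotv (xbar - xstar) u + dotv (xbar - xk) u
    - dotv (xk - xstar) (ek - alpha^-1 *: g).
  have Ep : G0 + p = xi - u - (ek - alpha^-1 *: g).
    by rewrite /p /xi /qk /u; apply/rowP => i; rewrite !mxE; field; rewrite gt_eqF.
  have -> : xbar - xstar = (xbar - xk) + (xk - xstar) by rewrite addrA subrK.
  rewrite -(opprB xk xstar) dotvNr opprK -dotvDl Ep (dotvBl (xi - u)) (dotvBl xi u).
  by rewrite (dotvDl (xbar - xk)) (dotvC (xk - xstar) u) (dotvC (xk - xstar)); ring.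
have kL : alpha * L * (alpha ^+ 2 * nrm xi ^+ 2) <= alpha ^+ 2 * nrm xi ^+ 2.
  by apply: ler_piMl => //; rewrite mulr_ge0 ?sqr_ge0.
have a2 : 0 <= 2 * alpha by rewrite mulr_ge0 // ltW.
move: (ler_wpM2l a2 Hf) (ler_wpM2l a2 Hh) (ler_wpM2l a2 HD).
move: (congr1 ( *%R (2 * alpha)) Edot); rewrite Exi; lra.
Qed.
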